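(* Let $\lambda>0$, $m>0$, $n>0$, $\tan\theta=n/m$, and let $\varphi(\alpha,\beta)=\frac12(\alpha^2+2b\alpha\beta+a\beta^2)+c\alpha+d\beta$ be the conic through $X=(\lambda,0)$, $Y=(0,0)$, $Z=(m,n)$ satisfying (P1) $\varphi(X)=\varphi(Y)=\varphi(Z)=0$ and (P2) $Y-X$ is a positive multiple of $-\nabla\varphi(X)$ and $Z-Y$ is a positive multiple of $-\nabla\varphi(Y)$. Then the conic $\{\varphi=0\}$ is an ellipse if and only if $$0<m<\frac{4\lambda(1+\tan^2\theta)}{(\tan^2\theta+2)^2}.$$
   Context: The coefficients of such a conic are $b=\frac{n}{2m}$, $c=-\lambda/2$, $d=-b\lambda$, $a=\frac{(\lambda-m)(m^2+n^2)}{m n^2}$; the conic is an ellipse iff $a>b^2$. *)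

From mathcomp Require Import all_boot all_order all_algebra.
From mathcomp Require Import all_classical all_reals all_analysis.
Set Implicit Arguments. Unset Strict Implicit. Unset Printing Implicit Defensive.
Import Order.TTheory GRing.Theory Num.Theory.
Local Open Scope ring_scope.

Definition conic {R : realType} (a b c d : R) (p : R * R) : R :=
  2^-1 * (p.1 ^+ 2 + 2 * b * p.1 * p.2 + a * p.2 ^+ 2) + c * p.1 + d * p.2.

Definition conic_grad {R : realType} (a b c d : R) (p : R * R) : R * R :=
  (p.1 + b * p.2 + c, b * p.1 + a * p.2 + d).

Definition pos_multiple {R : realType} (u v : R * R) : Prop :=
  exists t : R, 0 < t /\ u = (t * v.1, t * v.2).

(* The conic {phi = 0} (passing through a point) is an ellipse iff its
   quadratic part is positive definite, i.e. a > b^2. *)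
Definition is_ellipse {R : realType} (a b c d : R) : Prop := b ^+ 2 < a.

From mathcomp Require Import all_boot all_order all_algebra.
From mathcomp Require Import all_classical all_reals all_analysis.
From mathcomp Require Import ring.
Import Order.TTheory GRing.Theory Num.Theory.
Local Open Scope ring_scope.

(* Conditions (P1) and (P2) determine the conic: (P1) at X fixes c, the
   direction of the gradient at X gives d = - b lam, the direction of the
   gradient at Y then fixes b, and (P1) at Z fixes a. Only the parallelism in
   (P2) is needed, not the sign of the multiples. Substituting, a - b^2 is a
   positive multiple of 4 lam (1 + tan^2) - m (tan^2 + 2)^2. *)

Lemma pos_multiple_cross (R : realType) (u v : R * R) :
  pos_multiple u v -> u.1 * v.2 = u.2 * v.1.
Proof. by case=> t [_ ->] /=; rewrite mulrAC. Qed.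

Section ConicCoefficients.
Context {R : realType} {a b c d lam m n : R}.
Hypotheses (lam_neq0 : lam != 0) (m_neq0 : m != 0) (n_neq0 : n != 0).

Lemma conic_c : conic a b c d (lam, 0) = 0 -> c = - lam / 2.
Proof.
rewrite /conic /= => onX; apply: (mulIf lam_neq0); apply/eqP.
by rewrite -subr_eq0 -onX; apply/eqP; field.
Qed.

Lemma conic_d :
  pos_multiple ((0, 0) - (lam, 0))%R (- conic_grad a b c d (lam, 0))%R ->
  d = - b * lam.
Proof.
move/pos_multiple_cross => /=; rewrite !(mulr0, addr0, subrr, mul0r, sub0r) mulrNN.
move/eqP; rewrite mulf_eq0 (negPf lam_neq0) /=.
by rewrite addrC addr_eq0 mulNr => /eqP.
Qed.

Lemma conic_b : c = - lam / 2 -> d = - b * lam ->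
  pos_multiple ((m, n) - (0, 0))%R (- conic_grad a b c d (0, 0))%R ->
  b = n / (2 * m).
Proof.
move=> -> -> /pos_multiple_cross /=.
rewrite !(mul0r, mulr0, addr0, add0r, subr0) => cross.
apply: (mulIf lam_neq0); apply/eqP; rewrite -subr_eq0.
have -> : b * lam - n / (2 * m) * lam
          = (m * - (- b * lam) - n * - (- lam / 2)) / m by field.
by rewrite cross subrr mul0r.
Qed.

Lemma conic_a : c = - lam / 2 -> d = - b * lam -> b = n / (2 * m) ->
  conic a b c d (m, n) = 0 ->
  a = (lam - m) * (m ^+ 2 + n ^+ 2) / (m * n ^+ 2).
Proof.
rewrite /conic /= => -> -> -> onZ.
apply: (mulIf (mulf_neq0 m_neq0 (expf_neq0 2 n_neq0))); apply/eqP.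
rewrite mulfVK ?mulf_neq0 ?expf_neq0 // -subr_eq0.
have -> : a * (m * n ^+ 2) - (lam - m) * (m ^+ 2 + n ^+ 2)
  = 2 * m * (2^-1 * (m ^+ 2 + 2 * (n / (2 * m)) * m * n + a * n ^+ 2)
             + - lam / 2 * m + - (n / (2 * m)) * lam * n) by field.
by rewrite onZ mulr0.
Qed.

Lemma conic_discriminant : b = n / (2 * m) ->
  a = (lam - m) * (m ^+ 2 + n ^+ 2) / (m * n ^+ 2) ->
  a - b ^+ 2 = (4 * lam * (1 + (n / m) ^+ 2) - m * ((n / m) ^+ 2 + 2) ^+ 2)
               * m / (4 * n ^+ 2).
Proof. by move=> -> ->; field; rewrite m_neq0 n_neq0. Qed.

End ConicCoefficients.

Theorem proposition2 (R : realType) (lam m n theta a b c d : R) :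
  0 < lam -> 0 < m -> 0 < n -> tan theta = n / m ->
  (* (P1) *)
  conic a b c d (lam, 0) = 0 -> conic a b c d (0, 0) = 0 ->
  conic a b c d (m, n) = 0 ->
  (* (P2) *)
  pos_multiple ((0, 0) - (lam, 0))%R (- conic_grad a b c d (lam, 0))%R ->
  pos_multiple ((m, n) - (0, 0))%R (- conic_grad a b c d (0, 0))%R ->
  (is_ellipse a b c d <->
   (0 < m /\ m < 4 * lam * (1 + tan theta ^+ 2) / (tan theta ^+ 2 + 2) ^+ 2)).
Proof.
(* (P1) at Y holds for every conic of this form. *)
move=> lam_gt0 m_gt0 n_gt0 -> onX _ onZ dirX dirY.
have [lam0 m0 n0] := And3 (lt0r_neq0 lam_gt0) (lt0r_neq0 m_gt0) (lt0r_neq0 n_gt0).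
have hc := conic_c lam0 onX.
have hd := conic_d lam0 dirX.
have hb := conic_b lam0 m0 hc hd dirY.
have ha := conic_a m0 n0 hc hd hb onZ.
have scale_gt0 : 0 < m / (4 * n ^+ 2) by rewrite divr_gt0 ?mulr_gt0 ?exprn_gt0.
have den_gt0 : 0 < ((n / m) ^+ 2 + 2) ^+ 2.
  by rewrite exprn_gt0 // ltr_wpDl ?sqr_ge0.
rewrite /is_ellipse -subr_gt0 (conic_discriminant m0 n0 hb ha) -mulrA.
rewrite pmulr_lgt0 // subr_gt0 -ltr_pdivlMr //.
by split=> [|[]].
Qed.
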